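(* Let $\div$ be an AGM contraction operator for epistemic states. Then $\div$ satisfies (C8) if and only if it satisfies (C8$_{\mathrm{cond}}$), and $\div$ satisfies (C9) if and only if it satisfies (C9$_{\mathrm{cond}}$), where, for all epistemic states $\Psi$ and formulas $\alpha,\beta,\gamma$: (C8) if $\neg\alpha\models\beta$ then $\mathrm{Bel}(\Psi\div\alpha\div\beta) =_\alpha \mathrm{Bel}(\Psi\div\beta)$; (C9) if $\alpha\models\beta$ then $\mathrm{Bel}(\Psi\div\alpha\div\beta) =_{\neg\beta} \mathrm{Bel}(\Psi\div\beta)$; (C8$_{\mathrm{cond}}$) if $\neg\alpha\models\beta$ then $\Psi\div\alpha\models(\gamma\lor\neg\alpha\,\|\,\beta) \Leftrightarrow \Psi\models(\gamma\lor\neg\alpha\,\|\,\beta)$; (C9$_{\mathrm{cond}}$) if $\alpha\models\beta$ then $\Psi\div\alpha\models(\gamma\lor\beta\,\|\,\beta) \Leftrightarrow \Psi\models(\gamma\lor\beta\,\|\,\beta)$.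
   Context: $\Sigma$ is a nonempty finite set of propositional variables, $\mathcal{L}$ the propositional language over $\Sigma$, $\Omega$ the set of worlds. $[\![\alpha]\!]$ is the set of models of $\alpha$; for a set $X$ of formulas $[\![X]\!]$ is the set of worlds satisfying all of $X$; $Cn(X)=\{\beta\mid X\models\beta\}$. $\mathcal{E}$ is a set of epistemic states; each $\Psi\in\mathcal{E}$ has a deductively closed belief set $\mathrm{Bel}(\Psi)\subseteq\mathcal{L}$; $\Psi\models\alpha$ iff $\alpha\in\mathrm{Bel}(\Psi)$; $[\![\Psi]\!]=[\![\mathrm{Bel}(\Psi)]\!]$. A belief change operator is a map $\div:\mathcal{E}\times\mathcal{L}\to\mathcal{E}$; $\Psi\div\alpha\div\beta$ means $(\Psi\div\alpha)\div\beta$. An AGM contraction operator for epistemic states is a belief change operator satisfying for all $\Psi,\alpha,\beta$: (C1) $\mathrm{Bel}(\Psi\div\alpha)\subseteq\mathrm{Bel}(\Psi)$; (C2) if $\alpha\notin\mathrm{Bel}(\Psi)$ then $\mathrm{Bel}(\Psi)\subseteq\mathrm{Bel}(\Psi\div\alpha)$; (C3) if $\alpha\not\equiv\top$ then $\alpha\notin\mathrm{Bel}(\Psi\div\alpha)$; (C4) $\mathrm{Bel}(\Psi)\subseteq Cn(\mathrm{Bel}(\Psi\div\alpha)\cup\{\alpha\})$; (C5) if $\alpha\equiv\beta$ then $\mathrm{Bel}(\Psi\div\alpha)=\mathrm{Bel}(\Psi\div\beta)$; (C6) $\mathrm{Bel}(\Psi\div\alpha)\cap\mathrm{Bel}(\Psi\div\beta)\subseteq\mathrm{Bel}(\Psi\div(\alpha\land\beta))$;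 (C7) if $\beta\notin\mathrm{Bel}(\Psi\div(\alpha\land\beta))$ then $\mathrm{Bel}(\Psi\div(\alpha\land\beta))\subseteq\mathrm{Bel}(\Psi\div\beta)$. Contractionals (relative to the fixed operator $\div$): $\Psi$ accepts the contractional $(\beta\,\|\,\alpha)$, written $\Psi\models(\beta\,\|\,\alpha)$, iff $\Psi\div\alpha\models\beta$. $\alpha$-equivalence: for $\Omega_1,\Omega_2\subseteq\Omega$, $\Omega_1=_\alpha\Omega_2$ iff $\Omega_1\cap[\![\alpha]\!]=\Omega_2\cap[\![\alpha]\!]$; for sets of formulas $X=_\alpha Y$ iff $[\![X]\!]=_\alpha[\![Y]\!]$. *)

From Stdlib Require Import List.
Set Implicit Arguments.

Inductive form (V : Type) : Type :=
| FVar : V -> form V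
| FTop : form V
| FBot : form V
| FNeg : form V -> form V
| FAnd : form V -> form V -> form V
| FOr  : form V -> form V -> form V
| FImp : form V -> form V -> form V.
Arguments FTop {V}. Arguments FBot {V}.

Definition world (V : Type) := V -> bool.

Fixpoint sat (V : Type) (w : world V) (a : form V) : Prop :=
  match a with
  | FVar x => w x = true
  | FTop => True
  | FBot => False
  | FNeg b => ~ sat w b
  | FAnd b c => sat w b /\ sat w c
  | FOr b c => sat w b \/ sat w c
  | FImp b c => sat w b -> sat w c
  end.

Definition fset (V : Type) := form V -> Prop.

Definition sat_set (V : Type) (w : world V) (X : fset V) : Prop :=
  forall b, X b -> sat w b.

Definition entails (V : Type) (a b : form V) : Prop :=
  forall w : world V, sat w a -> sat w b.

Definition equiv (V : Type) (a b : form V) : Prop :=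
  forall w : world V, sat w a <-> sat w b.

Definition Cn (V : Type) (X : fset V) : fset V :=
  fun b => forall w : world V, sat_set w X -> sat w b.

Definition subset (V : Type) (X Y : fset V) : Prop := forall b, X b -> Y b.

Definition eq_mod (V : Type) (a : form V) (X Y : fset V) : Prop :=
  forall w : world V, sat w a -> (sat_set w X <-> sat_set w Y).

Definition finite_nonempty (V : Type) : Prop :=
  (exists l : list V, forall x : V, In x l) /\ inhabited V.

Definition bel_closed (V E : Type) (Bel : E -> fset V) : Prop :=
  forall Psi : E, subset (Cn (Bel Psi)) (Bel Psi).

Section Contraction.
Variables (V E : Type) (Bel : E -> fset V) (contr : E -> form V -> E).

Definition AGM_contraction : Prop :=
  (forall Psi a, subset (Bel (contr Psi a)) (Bel Psi)) /\
  (forall Psi a, ~ Bel Psi a -> subset (Bel Psi) (Bel (contr Psi a))) /\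
  (forall Psi a, ~ equiv a FTop -> ~ Bel (contr Psi a) a) /\
  (forall Psi a, subset (Bel Psi)
                   (Cn (fun g => Bel (contr Psi a) g \/ g = a))) /\
  (forall Psi a b, equiv a b -> forall g, Bel (contr Psi a) g <-> Bel (contr Psi b) g) /\
  (forall Psi a b g, Bel (contr Psi a) g -> Bel (contr Psi b) g ->
                     Bel (contr Psi (FAnd a b)) g) /\
  (forall Psi a b, ~ Bel (contr Psi (FAnd a b)) b ->
                   subset (Bel (contr Psi (FAnd a b))) (Bel (contr Psi b))).

(* Psi |= (d || b)  iff  Psi ÷ b |= d *)
Definition accepts (Psi : E) (d b : form V) : Prop := Bel (contr Psi b) d.

Definition C8 : Prop :=
  forall Psi a b, entails (FNeg a) b ->
    eq_mod a (Bel (contr (contr Psi a) b)) (Bel (contr Psi b)).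

Definition C9 : Prop :=
  forall Psi a b, entails a b ->
    eq_mod (FNeg b) (Bel (contr (contr Psi a) b)) (Bel (contr Psi b)).

Definition C8cond : Prop :=
  forall Psi a b g, entails (FNeg a) b ->
    (accepts (contr Psi a) (FOr g (FNeg a)) b <-> accepts Psi (FOr g (FNeg a)) b).

Definition C9cond : Prop :=
  forall Psi a b g, entails a b ->
    (accepts (contr Psi a) (FOr g b) b <-> accepts Psi (FOr g b) b).
End Contraction.

(* For deductively closed belief sets K1, K2 and formulas a, c with
   [[a]] the complement of [[c]], K1 =_a K2 holds iff K1 and K2 contain the
   same disjunctions g \/ c: a world of [[a]] satisfies g \/ c exactly when it
   satisfies g. (C8) and (C9) are this equivalence for (a, c) = (a, ~a) and
   (~b, b); only deductive closure of the belief sets is used, not the AGM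
   postulates. *)
From Stdlib Require Import Classical.

Section ComplementaryFormulas.
Variables (V : Type) (a c : form V).
Hypothesis sat_a_iff_not_c : forall w, sat w a <-> ~ sat w c.

Lemma disj_incl_of_mod_incl (X Y : fset V) :
  subset (Cn Y) Y ->
  (forall w, sat w a -> sat_set w Y -> sat_set w X) ->
  forall g, X (FOr g c) -> Y (FOr g c).
Proof.
  intros Y_closed YX g Xgc. apply Y_closed. intros w wY.
  destruct (classic (sat w c)) as [wc | wnc].
  - now right.
  - exact (YX w (proj2 (sat_a_iff_not_c w) wnc) wY _ Xgc).
Qed.

Lemma mod_incl_of_disj_incl (X Y : fset V) :
  subset (Cn Y) Y ->
  (forall g, Y (FOr g c) -> X (FOr g c)) ->
  forall w, sat w a -> sat_set w X -> sat_set w Y.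
Proof.
  intros Y_closed YX w wa wX b Yb.
  assert (Ybc : Y (FOr b c)) by (apply Y_closed; intros w' w'Y; left; exact (w'Y b Yb)).
  destruct (wX _ (YX _ Ybc)) as [wb | wc]; [exact wb |].
  exfalso. exact (proj1 (sat_a_iff_not_c w) wa wc).
Qed.

Lemma eq_mod_iff_same_disj (K1 K2 : fset V) :
  subset (Cn K1) K1 -> subset (Cn K2) K2 ->
  eq_mod a K1 K2 <-> (forall g, K1 (FOr g c) <-> K2 (FOr g c)).
Proof.
  intros K1_closed K2_closed. split.
  - intros K12 g. split; apply disj_incl_of_mod_incl; auto;
      intros w wa; apply (K12 w wa).
  - intros K12 w wa. split; apply mod_incl_of_disj_incl; auto;
      intro g; apply K12.
Qed.

End ComplementaryFormulas.

Lemma sat_iff_not_sat_neg (V : Type) (a : form V) (w : world V) :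
  sat w a <-> ~ sat w (FNeg a).
Proof. simpl. split; [tauto | apply NNPP]. Qed.

Lemma sat_neg_iff_not_sat (V : Type) (b : form V) (w : world V) :
  sat w (FNeg b) <-> ~ sat w b.
Proof. reflexivity. Qed.

Theorem mainTheorem6 (V E : Type) (Bel : E -> fset V) (contr : E -> form V -> E)
  (hV : finite_nonempty V) (hBel : bel_closed Bel)
  (hAGM : AGM_contraction Bel contr) :
  (C8 Bel contr <-> C8cond Bel contr) /\ (C9 Bel contr <-> C9cond Bel contr).
Proof.
  assert (C8_step : forall Psi Psi' (a : form V),
    eq_mod a (Bel Psi) (Bel Psi') <->
    (forall g, Bel Psi (FOr g (FNeg a)) <-> Bel Psi' (FOr g (FNeg a))))
    by (intros; apply eq_mod_iff_same_disj; auto; apply sat_iff_not_sat_neg).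
  assert (C9_step : forall Psi Psi' (b : form V),
    eq_mod (FNeg b) (Bel Psi) (Bel Psi') <->
    (forall g, Bel Psi (FOr g b) <-> Bel Psi' (FOr g b)))
    by (intros; apply eq_mod_iff_same_disj; auto; apply sat_neg_iff_not_sat).
  unfold C8, C8cond, C9, C9cond, accepts. split; split.
  - intros H Psi a b g hab. now apply C8_step, H.
  - intros H Psi a b hab. apply C8_step. intro g. now apply H.
  - intros H Psi a b g hab. now apply C9_step, H.
  - intros H Psi a b hab. apply C9_step. intro g. now apply H.
Qed.
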